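(* Let $A\in {\operatorname{\mathsf{TPD}}}_n(\mathbb{S}_{\max}^\vee)$, set $\gamma_i=a_{ii}$ ordered so that $\gamma_1\succeq\cdots\succeq\gamma_n$, let $\gamma=\gamma_k$ and $B=B_k=\gamma_k I\ominus A$. Assume there exists a column $j$ of $B^\mathrm{adj}$ which is in $(\mathbb{S}_{\max}^\vee)^n\setminus \{\mathbf{0}\}$. Then, $j=k$, and any $\mathbb{S}_{\max}$-eigenvector is a multiple of $B^\mathrm{adj}_{:,j}$ and $\gamma$ is a simple (algebraic) $\mathbb{S}_{\max}$-eigenvalue of $A$.
   Context: $\mathbb{S}_{\max}$ is the symmetrized tropical semiring over a divisible totally ordered abelian group, with zero $\mathbf{0}$, unit $\mathbf{1}$, minus $\ominus$; $\mathbb{S}_{\max}^\vee$ is the set of signed elements; $a\,\nabla\, b$ iff $a\ominus b$ is balanced; $a\preceq b$ iff $b=a\oplus b$. $A\in{\operatorname{\mathsf{TPD}}}_n(\mathbb{S}_{\max}^\vee)$: $A$ symmetric with signed entries, $\mathbf{0}<a_{ii}$ and $a_{ij}^2<a_{ii}a_{jj}$ for $i\ne j$ (where $a<b$ iff $b\ominus a$ is positive). Its $\mathbb{S}_{\max}$-eigenvalues are its diagonal entries (simple if occurring once). $(M^{\mathrm{adj}})_{ij}=(\ominus\mathbf{1})^{i+j}\det M[\hat j,\hat i]$ (signed determinant), $M_{:,j}$ the $j$-th column. An $\mathbb{S}_{\max}$-eigenvector associated to $\gamma$ is $v\in(\mathbb{S}_{\max}^\vee)^n\setminus\{\mathbf{0}\}$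 with $Av\,\nabla\,\gamma v$. *)

From HB Require Import structures.
From mathcomp Require Import all_boot all_order all_algebra all_fingroup.
Set Implicit Arguments. Unset Strict Implicit. Unset Printing Implicit Defensive.
Import Order.TTheory GRing.Theory Num.Theory.
Local Open Scope ring_scope.

Definition divisible_toag (G : porderZmodType) : Prop :=
  [/\ (forall x y : G, (x <= y) || (y <= x)),
      (forall x y z : G, x <= y -> x + z <= y + z) &
      (forall (m : nat) (x : G), (0 < m)%N -> exists y : G, y *+ m = x)].

Inductive tsign := sPos | sNeg | sBal.

(* S_max = {0} ∪ (G × {+,-,•}); None is the zero 𝟘 (= -oo) *)
Definition Smax (G : porderZmodType) := option (G * tsign).

Section Smax.
Variable G : porderZmodType.
Local Notation S := (Smax G).

Definition szero : S := None.
Definition sone : S := Some (0, sPos).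

Definition sign_mul (s t : tsign) : tsign :=
  match s, t with
  | sBal, _ | _, sBal => sBal
  | sPos, t => t
  | sNeg, sPos => sNeg
  | sNeg, sNeg => sPos
  end.

Definition sign_opp (s : tsign) : tsign :=
  match s with sPos => sNeg | sNeg => sPos | sBal => sBal end.

Definition sign_eqb (s t : tsign) : bool :=
  match s, t with
  | sPos, sPos | sNeg, sNeg | sBal, sBal => true | _, _ => false end.

Definition sadd (x y : S) : S :=
  match x, y with
  | None, _ => y
  | _, None => x
  | Some (a, s), Some (b, t) =>
      if a < b then y else if b < a then x
      else if sign_eqb s t then x else Some (a, sBal)
  end.

Definition smul (x y : S) : S :=
  match x, y with
  | Some (a, s), Some (b, t) => Some (a + b, sign_mul s t)
  | _, _ => None
  end.

Definition sopp (x : S) : S :=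
  match x with None => None | Some (a, s) => Some (a, sign_opp s) end.

Definition ssub (x y : S) : S := sadd x (sopp y).

Definition signed (x : S) : Prop :=
  match x with None => True | Some (_, s) => s <> sBal end.

Definition balanced (x : S) : Prop := sopp x = x.

Definition spositive (x : S) : Prop :=
  match x with Some (_, sPos) => True | _ => False end.

Definition sbal (x y : S) : Prop := balanced (ssub x y).
Definition sle (x y : S) : Prop := y = sadd x y.
Definition slt (x y : S) : Prop := spositive (ssub y x).

Definition ssign_pow (m : nat) : S := if odd m then sopp sone else sone.

Definition sbig_add (I : finType) (F : I -> S) : S := \big[sadd/szero]_(i : I) F i.
Definition sbig_mul (I : finType) (F : I -> S) : S := \big[smul/sone]_(i : I) F i.

Definition sdet (m : nat) (M : 'M[S]_m) : S :=
  sbig_add (fun s : 'S_m =>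
    smul (ssign_pow (odd_perm s)) (sbig_mul (fun i => M i (s i)))).

Definition sadj (m : nat) (M : 'M[S]_m.+1) : 'M[S]_m.+1 :=
  \matrix_(i, j) smul (ssign_pow (nat_of_ord i + nat_of_ord j)%N) (sdet (row' j (col' i M))).

Definition sshift (m : nat) (g : S) (A : 'M[S]_m) : 'M[S]_m :=
  \matrix_(i, j) ssub (if i == j then g else szero) (A i j).

Definition smulmxv (m : nat) (A : 'M[S]_m) (v : 'I_m -> S) : 'I_m -> S :=
  fun i => sbig_add (fun j => smul (A i j) (v j)).

Definition signed_vec (m : nat) (v : 'I_m -> S) : Prop := forall i, signed (v i).
Definition nonzero_vec (m : nat) (v : 'I_m -> S) : Prop := exists i, v i <> szero.

Definition TPD (m : nat) (A : 'M[S]_m) : Prop :=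
  [/\ (forall i j, A i j = A j i),
      (forall i j, signed (A i j)),
      (forall i, slt szero (A i i)) &
      (forall i j, i != j -> slt (smul (A i j) (A i j)) (smul (A i i) (A j j)))].

Definition seigenvector (m : nat) (A : 'M[S]_m) (g : S) (v : 'I_m -> S) : Prop :=
  [/\ signed_vec v, nonzero_vec v & forall i, sbal (smulmxv A v i) (smul g (v i))].

(* For A ∈ TPD, the S_max-eigenvalues are the diagonal entries, with
   (algebraic) multiplicity the number of occurrences; simple = occurs once *)
Definition simple_eigenvalue_TPD (m : nat) (A : 'M[S]_m) (g : S) : Prop :=
  exists k, A k k = g /\ forall i, A i i = g -> i = k.

End Smax.

From HB Require Import structures.
From mathcomp Require Import all_boot all_order all_algebra all_fingroup.
From mathcomp Require Import zify.
Import Order.TTheory GRing.Theory Num.Theory.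
Set Implicit Arguments. Unset Strict Implicit. Unset Printing Implicit Defensive.
Local Open Scope ring_scope.

(* Positive definiteness makes B strictly
   diagonally dominant in the tropical sense: its diagonal is nonzero and
   2|b_rc| < |b_rr| + |b_cc| off the diagonal.  In every permutation expansion of
   a principal minor the identity then beats all other terms, so the diagonal
   entries of B^adj are the products of the b_rr, r <> j.  As b_kk = γ ⊖ γ is
   balanced, a signed column j forces j = k, and likewise forbids a_ii = γ for
   i <> k.  Pairing permutations through the transposition (k l) shows that the
   column u = B^adj_{:,k} satisfies, for every l <> k, the exact equation
   b_ll u_l = ⊕_{m <> l} a_lm u_m, with b_ll signed.  An eigenvector v satisfies
   these equations up to balance; if v <> λu where v_k = λu_k, look at a row l
   where they differ and whose weight 2 max(|v_l|, |λu_l|) + |b_ll| is maximal: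
   all other discrepancies in that row are negligible, so b_ll (v_l ⊖ λu_l)
   would be balanced, which is impossible for signed v_l <> λu_l. *)

Section OrderedGroup.
Variable G : porderZmodType.
Hypothesis HG : divisible_toag G.

Lemma toag_total (x y : G) : (x <= y) || (y <= x).
Proof. by case: HG. Qed.

Lemma toag_trichotomy (x y : G) : [\/ x < y, x = y | y < x].
Proof.
case: (eqVneq x y) => [->|ne]; first by constructor 2.
case/orP: (toag_total x y) => le; [constructor 1 | constructor 3];
  by rewrite lt_neqAle le andbT // eq_sym.
Qed.

Lemma toag_ltNge (x y : G) : (x < y) = ~~ (y <= x).
Proof.
case: (toag_trichotomy x y) => [lt|->|gt]; first by rewrite lt lt_geF.
  by rewrite ltxx lexx.
by rewrite (ltW gt) lt_gtF.
Qed.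

Lemma toag_leD2r (z x y : G) : x <= y -> x + z <= y + z.
Proof. by case: HG => _ leD _; apply: leD. Qed.

Lemma toag_ltD2r (z x y : G) : x < y -> x + z < y + z.
Proof.
rewrite !lt_neqAle => /andP[ne le]; rewrite toag_leD2r // andbT.
by apply: contra ne => /eqP/addIr ->.
Qed.

Lemma toag_ltD2l (z x y : G) : (z + x < z + y) = (x < y).
Proof.
apply/idP/idP => [|lt]; last by rewrite ![z + _]addrC toag_ltD2r.
by move/(toag_ltD2r (- z)); rewrite ![z + _]addrC !addrK.
Qed.

Lemma toag_leD (a b c d : G) : a <= b -> c <= d -> a + c <= b + d.
Proof.
move=> le1 le2; apply: le_trans (toag_leD2r c le1) _.
by rewrite ![b + _]addrC toag_leD2r.
Qed.

Lemma toag_ltD_le (a b c d : G) : a < b -> c <= d -> a + c < b + d.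
Proof.
move=> lt le; apply: lt_le_trans (toag_ltD2r c lt) _.
by rewrite ![b + _]addrC toag_leD2r.
Qed.

Lemma toag_ltMn2 (x y : G) : x *+ 2 < y *+ 2 -> x < y.
Proof.
rewrite (toag_ltNge x) (toag_ltNge (x *+ 2)); apply: contra => le.
by rewrite !mulr2n toag_leD.
Qed.

Lemma toag_le_sum (I : finType) (P : pred I) (f g : I -> G) :
  (forall i, P i -> f i <= g i) -> \sum_(i | P i) f i <= \sum_(i | P i) g i.
Proof. by move=> le; apply: (big_ind2 (fun x y => x <= y)) => // *; exact: toag_leD. Qed.

Lemma toag_lt_sum (I : finType) (P : pred I) (f g : I -> G) i0 : P i0 ->
  (forall i, P i -> f i < g i) -> \sum_(i | P i) f i < \sum_(i | P i) g i.
Proof.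
move=> Pi0 lt; rewrite (bigD1 i0) // [X in _ < X](bigD1 i0) //=.
apply: toag_ltD_le; first exact: lt.
by apply: toag_le_sum => i /andP[Pi _]; apply/ltW/lt.
Qed.

Lemma toag_ltD_double (c x d d' h h' : G) :
  c *+ 2 < d + d' -> x <= h' -> h' *+ 2 + d' <= h *+ 2 + d -> c + x < d + h.
Proof.
move=> cd xh hd; apply: toag_ltMn2; rewrite mulrnDl.
have -> : (d + h) *+ 2 = d + (h *+ 2 + d).
  by rewrite mulrnDl [d *+ 2]mulr2n -addrA (addrC d (h *+ 2)).
apply: (lt_le_trans (toag_ltD_le cd (_ : x *+ 2 <= h' *+ 2))); first by rewrite !mulr2n toag_leD.
by rewrite addrAC -addrA toag_leD.
Qed.

Lemma toag_argmax (I : eqType) (K : I -> G) (s : seq I) x : x \in s ->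
  exists2 l, l \in s & {in s, forall m, K m <= K l}.
Proof.
elim: s x => // y s IH x _.
have [->|[z zs]] : s = [::] \/ exists z, z \in s.
  by case: s {IH} => [|z s]; [left | right; exists z; rewrite inE eqxx].
  by exists y; rewrite ?mem_seq1 // => m; rewrite mem_seq1 => /eqP ->.
have [l ls lmax] := IH z zs.
case/orP: (toag_total (K y) (K l)) => [yl|ly].
  exists l; first by rewrite inE ls orbT.
  by move=> m; rewrite inE => /predU1P[->|/lmax].
exists y; first by rewrite inE eqxx.
by move=> m; rewrite inE => /predU1P[->|/lmax/le_trans]; [|apply].
Qed.

End OrderedGroup.

Section PermutationWeights.
Variable G : porderZmodType.
Hypothesis HG : divisible_toag G.
Variables (I : finType) (w : I -> I -> G).

Lemma sum_perm_lt_on (s : {perm I}) (A : {set I}) x : x \in A ->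
  (forall r, (s r \in A) = (r \in A)) ->
  {in A, forall r, w r (s r) *+ 2 < w r r + w (s r) (s r)} ->
  \sum_(r in A) w r (s r) < \sum_(r in A) w r r.
Proof.
move=> xA sA lt; apply: (toag_ltMn2 HG).
have -> : (\sum_(r in A) w r r) *+ 2 = \sum_(r in A) (w r r + w (s r) (s r)).
  rewrite big_split /= mulr2n; congr (_ + _).
  by rewrite (reindex_inj (@perm_inj _ s)); apply: eq_bigl => r; rewrite /= sA.
by rewrite -sumrMnl; apply: (toag_lt_sum HG) xA _.
Qed.

Lemma sum_perm_lt_id (s : {perm I}) (P : pred I) : s != 1%g ->
  (forall r, s r != r -> P r) ->
  (forall r, s r != r -> w r (s r) *+ 2 < w r r + w (s r) (s r)) ->
  \sum_(r | P r) w r (s r) < \sum_(r | P r) w r r.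
Proof.
move=> s_neq1 suppP lt; pose A := [set r | s r != r].
have [x xA] : exists x, x \in A.
  apply/existsP; apply: contraR s_neq1 => /existsPn s1.
  by apply/eqP/permP => r; move: (s1 r); rewrite inE perm1 negbK => /eqP.
have sA r : (s r \in A) = (r \in A) by apply: perm_closed; apply/subsetP => y; rewrite !inE.
rewrite (bigID (mem A)) [X in _ < X](bigID (mem A)) /=.
have PA (F : I -> G) : \sum_(r | P r && (r \in A)) F r = \sum_(r in A) F r.
  by apply: eq_bigl => r; case: (boolP (r \in A)); rewrite ?andbT ?andbF // inE => /suppP.
rewrite !PA; apply: (toag_ltD_le HG).
  by apply: sum_perm_lt_on xA sA _ => r; rewrite inE => /lt.
by apply: (toag_le_sum HG) => r /andP[_]; rewrite inE negbK => /eqP ->.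
Qed.

End PermutationWeights.

Section PermOrbits.
Variable T : finType.
Implicit Types (t : {perm T}) (k l r : T).

Lemma porbit_closed t l r : (t r \in porbit t l) = (r \in porbit t l).
Proof. by rewrite -!eq_porbit_mem -[t r]/(aperm r t) -(expg1 t) porbit_perm. Qed.

Lemma porbit_moved t l r : t l != l -> r \in porbit t l -> t r != r.
Proof.
move=> tl; rewrite porbit_sym => /porbitP[i li]; apply: contra tl => /eqP tr.
by rewrite li (permX_fix i tr) tr.
Qed.

Lemma porbit_tpermM t k l : k != l -> k \in porbit t l ->
  k \notin porbit (tperm k l * t) l.
Proof.
move=> kl klt; have := porbits_mul_tperm t k l; have := porbits_mul_tperm (tperm k l * t) k l.
rewrite /= tpermKg klt kl /=; case: (k \in porbit (tperm k l * t) l) => //=; lia.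
Qed.

Lemma perm_skip_orbit t k l : k \notin porbit t l ->
  exists p : {perm T}, [/\ p k = l, p l = t k,
    {in porbit t l, forall r, r != l -> p r = r} &
    forall r, r \notin porbit t l -> r != k -> p r = t r].
Proof.
move=> kO; set O := porbit t l.
have tkO : t k \notin O by rewrite porbit_closed.
have lO : l \in O := porbit_id t l.
have tkl : t k != l by apply: contraNneq tkO => ->.
pose u r := if r \in O then r else t r.
have u_inj : injective u.
  move=> x y; rewrite /u; case: ifP => xO; case: ifP => yO // eq.
  - by move: xO; rewrite eq porbit_closed yO.
  - by move: yO; rewrite -eq porbit_closed xO.
  - exact: perm_inj eq.
exists (perm u_inj * tperm l (t k))%g; split.
- by rewrite permM permE /u (negbTE kO) tpermR.
- by rewrite permM permE /u lO tpermL.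
- move=> r rO rl; rewrite permM permE /u rO tpermD // eq_sym //.
  by apply: contraNneq tkO => <-.
- move=> r rO rk; rewrite permM permE /u (negbTE rO) tpermD //.
  + by apply: contraNneq rO => ltr; rewrite -porbit_closed -ltr.
  + by apply: contra rk => /eqP/perm_inj ->.
Qed.

End PermOrbits.

Lemma sign_eqP : Equality.axiom sign_eqb.
Proof. by do 2!case; constructor. Qed.

HB.instance Definition _ := hasDecEq.Build tsign sign_eqP.

Reserved Notation "\bigoplus_ ( i | P ) F"
  (at level 41, F at level 41, i, P at level 50).
Reserved Notation "\bigoplus_ ( i : T | P ) F"
  (at level 41, F at level 41, i, T, P at level 50).
Reserved Notation "\bigotimes_ ( i | P ) F"
  (at level 36, F at level 36, i, P at level 50).
Reserved Notation "\bigotimes_ i F"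
  (at level 36, F at level 36, i at level 0).

Section Smax.
Variable G : porderZmodType.
Hypothesis HG : divisible_toag G.
Local Notation S := (Smax G).
Local Notation "𝟘" := (szero G).
Local Notation "𝟙" := (sone G).
Local Notation "x ⊕ y" := (sadd x y) (at level 50, left associativity).
Local Notation "x ⊗ y" := (smul x y) (at level 40, left associativity).
Local Notation "⊖ x" := (sopp x) (at level 35, right associativity).
Local Notation "x ⊖ y" := (ssub x y) (at level 50, left associativity).
Local Notation "\bigoplus_ ( i | P ) F" := (\big[@sadd G/szero G]_(i | P) F).
Local Notation "\bigoplus_ ( i : T | P ) F" := (\big[@sadd G/szero G]_(i : T | P) F).
Local Notation "\bigotimes_ ( i | P ) F" := (\big[@smul G/sone G]_(i | P) F).
Local Notation "\bigotimes_ i F" := (\big[@smul G/sone G]_i F).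

Ltac decide_lt :=
  repeat (rewrite ?ltxx; match goal with
  | H : is_true (?a < ?b) |- context [?a < ?b] => rewrite H
  | H : is_true (?a < ?b) |- context [?b < ?a] => rewrite (lt_gtF H)
  end); rewrite ?ltxx.

Lemma sadd0l : left_id 𝟘 (@sadd G). Proof. by []. Qed.
Lemma sadd0r : right_id 𝟘 (@sadd G). Proof. by case=> [[]|]. Qed.

Lemma saddC : commutative (@sadd G).
Proof.
move=> [[a s]|] [[b t]|] //=.
by case: (toag_trichotomy HG a b) => [lt|<-|gt]; decide_lt => //; case: s; case: t.
Qed.

Lemma saddA : associative (@sadd G).
Proof.
move=> [[a s]|] [[b t]|] [[c u]|] //=; rewrite ?sadd0r //.
case: (toag_trichotomy HG a b) => [ab|ab|ab]; case: (toag_trichotomy HG b c) => [bc|bc|bc];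
  case: (toag_trichotomy HG a c) => [ac|ac|ac]; subst => //=;
  try (by move: (lt_trans ab bc); decide_lt); try (by move: (lt_trans bc ab); decide_lt);
  try (by move: ab; decide_lt); try (by move: bc; decide_lt); try (by move: ac; decide_lt);
  decide_lt => //=; by case: s; case: t; case: u => /=; decide_lt.
Qed.

#[local] HB.instance Definition _ := Monoid.isComLaw.Build S 𝟘 (@sadd G) saddA saddC sadd0l.

Lemma smulC : commutative (@smul G).
Proof. by move=> [[a s]|] [[b t]|] //=; rewrite addrC; case: s; case: t. Qed.

Lemma smulA : associative (@smul G).
Proof. by move=> [[a s]|] [[b t]|] [[c u]|] //=; rewrite addrA; case: s; case: t; case: u. Qed.

Lemma smulCA (x y z : S) : x ⊗ (y ⊗ z) = y ⊗ (x ⊗ z).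
Proof. by rewrite !smulA (smulC x). Qed.

Lemma smul1l : left_id 𝟙 (@smul G).
Proof. by move=> [[a s]|] //=; rewrite add0r; case: s. Qed.

Lemma smul1r : right_id 𝟙 (@smul G).
Proof. by move=> x; rewrite smulC smul1l. Qed.

Lemma smul0r (x : S) : x ⊗ 𝟘 = 𝟘. Proof. by case: x => [[]|]. Qed.

#[local] HB.instance Definition _ := Monoid.isComLaw.Build S 𝟙 (@smul G) smulA smulC smul1l.

Lemma smulDr (x y z : S) : x ⊗ (y ⊕ z) = x ⊗ y ⊕ x ⊗ z.
Proof.
case: x y z => [[a s]|] [[b t]|] [[c u]|] //=; rewrite !(toag_ltD2l HG).
by do 2?case: ifP => _ //; case: s; case: t; case: u.
Qed.

Lemma smulDl (x y z : S) : (y ⊕ z) ⊗ x = y ⊗ x ⊕ z ⊗ x.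
Proof. by rewrite ![_ ⊗ x]smulC smulDr. Qed.

Lemma soppK : involutive (@sopp G).
Proof. by case=> [[a []]|]. Qed.

Lemma sopp_eq0 (x : S) : (⊖ x == 𝟘) = (x == 𝟘).
Proof. by case: x => [[]|]. Qed.

Lemma soppD (x y : S) : ⊖ (x ⊕ y) = ⊖ x ⊕ ⊖ y.
Proof.
case: x y => [[a s]|] [[b t]|] //=.
by do 2?case: ifP => _ //; case: s; case: t.
Qed.

Lemma smulNl (x y : S) : ⊖ x ⊗ y = ⊖ (x ⊗ y).
Proof. by case: x y => [[a s]|] [[b t]|] //=; case: s; case: t. Qed.

Lemma smulNr (x y : S) : x ⊗ ⊖ y = ⊖ (x ⊗ y).
Proof. by rewrite smulC smulNl smulC. Qed.

Lemma smul_sumr (I : finType) (P : pred I) (F : I -> S) a :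
  a ⊗ (\bigoplus_(i | P i) F i) = \bigoplus_(i | P i) a ⊗ F i.
Proof. by rewrite (big_endo (smul a)) ?smul0r // => x y; rewrite smulDr. Qed.

(* The modulus |x|, with the junk value [sabs 𝟘 = 0]; [ltabs] compares moduli
   with |𝟘| = -oo. *)
Definition sabs (x : S) : G := if x is Some (a, _) then a else 0.

Definition ltabs (x y : S) : bool :=
  match x, y with
  | _, None => false
  | None, Some _ => true
  | Some (a, _), Some (b, _) => a < b
  end.

Lemma ltabsxx (x : S) : ltabs x x = false.
Proof. by case: x => [[a s]|] //=; rewrite ltxx. Qed.

Lemma ltabsNl (x y : S) : ltabs (⊖ x) y = ltabs x y.
Proof. by case: x y => [[a s]|] [[b t]|]. Qed.

Lemma ltabsNr (x y : S) : ltabs x (⊖ y) = ltabs x y.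
Proof. by case: x y => [[a s]|] [[b t]|]. Qed.

Lemma sabsN (x : S) : sabs (⊖ x) = sabs x.
Proof. by case: x => [[]|]. Qed.

Lemma smul_eq0 (x y : S) : (x ⊗ y == 𝟘) = (x == 𝟘) || (y == 𝟘).
Proof. by case: x y => [[a s]|] [[b t]|]. Qed.

Lemma sabs_smul (x y : S) : x != 𝟘 -> y != 𝟘 -> sabs (x ⊗ y) = sabs x + sabs y.
Proof. by case: x y => [[a s]|] [[b t]|]. Qed.

Lemma ltabs0s (x : S) : ltabs 𝟘 x = (x != 𝟘).
Proof. by case: x => [[]|]. Qed.

Lemma ltabsE (x y : S) : x != 𝟘 -> y != 𝟘 -> ltabs x y = (sabs x < sabs y).
Proof. by case: x y => [[a s]|] [[b t]|]. Qed.

Lemma ltabs_smul2l (d x y : S) : d != 𝟘 -> ltabs (d ⊗ x) (d ⊗ y) = ltabs x y.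
Proof. by case: d => [[e s]|] // _; case: x y => [[a t]|] [[b u]|] //=; rewrite toag_ltD2l. Qed.

Lemma ltabs_saddr (x y z : S) : ltabs z (x ⊕ y) = ltabs z x || ltabs z y.
Proof.
case: x y z => [[a s]|] [[b t]|] [[c u]|] //=; rewrite ?orbF //;
  case: (toag_trichotomy HG a b) => [ab|<-|ab]; decide_lt => //=; try by case: ifP; rewrite ?orbb.
- by case: (boolP (c < a)) => // ca; rewrite (lt_trans ca ab).
- by case: (boolP (c < b)) => [cb|_]; rewrite ?orbF // (lt_trans cb ab).
Qed.

Lemma ltabs_saddl (x y z : S) : ltabs (x ⊕ y) z = ltabs x z && ltabs y z.
Proof.
case: x y z => [[a s]|] [[b t]|] [[c u]|] //=; rewrite ?andbT //;
  case: (toag_trichotomy HG a b) => [ab|<-|ab]; decide_lt => //=; try by case: ifP; rewrite ?andbb.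
- by case: (boolP (b < c)) => [bc|_]; rewrite ?andbF // (lt_trans ab bc).
- by case: (boolP (a < c)) => // ac; rewrite (lt_trans ab ac).
Qed.

Lemma sadd_ltabsr (x y : S) : ltabs y x -> x ⊕ y = x.
Proof. by case: x y => [[a s]|] [[b t]|] //= ba; rewrite (lt_gtF ba) ba. Qed.

Lemma sadd_eq_ltabs (p q x : S) : ltabs q x -> p ⊕ q = x -> p = x.
Proof.
move=> + pqx; rewrite -pqx ltabs_saddr ltabsxx orbF => qp.
by rewrite sadd_ltabsr.
Qed.

Lemma ltabs_sum (I : finType) (P : pred I) (F : I -> S) t j :
  P j -> ltabs t (F j) -> ltabs t (\bigoplus_(i | P i) F i).
Proof. by move=> Pj tF; rewrite (bigD1 j) //= ltabs_saddr tF. Qed.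

Lemma sum_ltabs (I : finType) (P : pred I) (F : I -> S) M :
  (forall i, P i -> F i = 𝟘 \/ ltabs (F i) M) ->
  \bigoplus_(i | P i) F i = 𝟘 \/ ltabs (\bigoplus_(i | P i) F i) M.
Proof.
move=> FM; apply: (big_ind (fun x => x = 𝟘 \/ ltabs x M)) => [|x y [->|xM] [->|yM]|//];
  rewrite ?sadd0r; by [left | right | right; rewrite ltabs_saddl xM].
Qed.

Lemma big_dominated (I : finType) (P Q : pred I) (F : I -> S) :
  (forall i, P i -> ~~ Q i -> F i = 𝟘 \/ exists2 j, P j && Q j & ltabs (F i) (F j)) ->
  \bigoplus_(i | P i) F i = \bigoplus_(i | P i && Q i) F i.
Proof.
move=> dom; rewrite (bigID Q) /=.
set M := \bigoplus_(i | P i && Q i) F i.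
have negl i : P i && ~~ Q i -> F i = 𝟘 \/ ltabs (F i) M.
  case/andP=> Pi nQi; case: (dom i Pi nQi) => [->|[j PQj ij]]; first by left.
  by right; apply: (@ltabs_sum _ (fun i => P i && Q i) F _ j PQj ij).
by case: (sum_ltabs negl) => [->|lt]; rewrite ?sadd0r ?sadd_ltabsr.
Qed.

Definition sbigger (x y : S) : S := if ltabs y x then x else y.

Lemma sabs_le_sbiggerl (x y : S) : x != 𝟘 -> sabs x <= sabs (sbigger x y).
Proof.
rewrite /sbigger; case: x y => [[a s]|] [[b t]|] //= _; case: ifP => //= ba.
by move/negbT: ba; rewrite (toag_ltNge HG) negbK.
Qed.

Lemma sabs_le_sbiggerr (x y : S) : y != 𝟘 -> sabs y <= sabs (sbigger x y).
Proof. by rewrite /sbigger; case: x y => [[a s]|] [[b t]|] //= _; case: ifP => //= /ltW. Qed.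

Lemma sbigger_neq0 (x y : S) : x != y -> sbigger x y != 𝟘.
Proof. by rewrite /sbigger; case: x y => [[a s]|] [[b t]|] //=; case: ifP. Qed.

Lemma smul_sbigger (d x y : S) : d != 𝟘 -> d ⊗ sbigger x y = sbigger (d ⊗ x) (d ⊗ y).
Proof. by move=> d0; rewrite /sbigger ltabs_smul2l //; case: ifP. Qed.

Lemma ssub_sadd_negligible (y z p q q' : S) :
  q = 𝟘 \/ ltabs q (sbigger y z) -> q' = 𝟘 \/ ltabs q' (sbigger y z) ->
  z = p ⊕ q -> y ⊖ (p ⊕ q') = y ⊖ z.
Proof.
rewrite /sbigger /ssub; case: ifP => [zy|_] qM q'M zpq.
  have y0 : y != 𝟘 by apply: contraTneq zy => ->; case: (z) => [[]|].
  have py : ltabs p y by move: zy; rewrite zpq ltabs_saddl => /andP[].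
  have pq'y : ltabs (p ⊕ q') y by rewrite ltabs_saddl py; case: q'M => [->|//]; rewrite ltabs0s.
  by rewrite (@sadd_ltabsr y) ?ltabsNl // (@sadd_ltabsr y) ?ltabsNl.
have pz : p = z.
  case: qM => [q0|qz]; first by rewrite zpq q0 sadd0r.
  by apply: sadd_eq_ltabs qz _; rewrite zpq.
by rewrite pz; case: q'M => [->|q'z]; rewrite ?sadd0r ?(@sadd_ltabsr z q').
Qed.

Lemma signed_smul (x y : S) : signed x -> signed y -> signed (x ⊗ y).
Proof. by case: x y => [[a s]|] [[b t]|] //=; case: s; case: t. Qed.

Lemma signed_balanced_eq0 (x : S) : signed x -> balanced x -> x = 𝟘.
Proof. by case: x => [[a []]|]. Qed.

Lemma ssub_signed_neq0 (x y : S) : signed x -> signed y -> x != y ->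
  signed (x ⊖ y) /\ x ⊖ y != 𝟘.
Proof.
rewrite /ssub; case: x y => [[a s]|] [[b t]|] //=; last by case: t.
case: (toag_trichotomy HG a b) => [ab|<-|ab]; decide_lt => /=;
  by case: s; case: t => //= _ _; rewrite ?eqxx.
Qed.

Lemma smul_ssubr (d x y : S) : d ⊗ (x ⊖ y) = d ⊗ x ⊖ d ⊗ y.
Proof. by rewrite /ssub smulDr smulNr. Qed.

Lemma perturbed_row_not_balanced (d y z p q q' : S) :
  signed d -> d != 𝟘 -> signed y -> signed z -> y != z ->
  q = 𝟘 \/ ltabs q (d ⊗ sbigger y z) -> q' = 𝟘 \/ ltabs q' (d ⊗ sbigger y z) ->
  d ⊗ z = p ⊕ q -> ~ balanced (d ⊗ y ⊖ (p ⊕ q')).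
Proof.
move=> d_sig d0 ys zs yz; rewrite smul_sbigger // => qM q'M zpq.
rewrite (ssub_sadd_negligible qM q'M zpq) -smul_ssubr => bal.
have [yz_sig yz0] := ssub_signed_neq0 ys zs yz.
have := signed_balanced_eq0 (signed_smul d_sig yz_sig) bal.
by apply/eqP; rewrite smul_eq0 negb_or d0.
Qed.

Definition sinv (x : S) : S := if x is Some (a, s) then Some (- a, s) else 𝟘.

Lemma sinvK (x : S) : signed x -> x != 𝟘 -> sinv x ⊗ x = 𝟙.
Proof. by case: x => [[a []]|] //= _ _; rewrite addNr. Qed.

Lemma signed_sinv (x : S) : signed x -> signed (sinv x).
Proof. by case: x => [[a []]|]. Qed.

Lemma bigmul_Some (I : finType) (P : pred I) (F : I -> S) :
  (forall i, P i -> F i != 𝟘) ->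
  exists s, \bigotimes_(i | P i) F i = Some (\sum_(i | P i) sabs (F i), s).
Proof.
move=> F0; apply: (big_rec2 (fun x y => exists s, x = Some (y, s))); first by exists sPos.
move=> i x y Pi [s ->]; move: (F0 i Pi).
by case: (F i) => [[a t]|] // _; exists (sign_mul t s).
Qed.

Lemma bigmul_neq0 (I : finType) (P : pred I) (F : I -> S) :
  (forall i, P i -> F i != 𝟘) -> \bigotimes_(i | P i) F i != 𝟘.
Proof. by move=> F0; have [s ->] := bigmul_Some F0. Qed.

Lemma bigmul_neq0_factor (I : finType) (P : pred I) (F : I -> S) i :
  \bigotimes_(i | P i) F i != 𝟘 -> P i -> F i != 𝟘.
Proof.
move=> + Pi; apply: contra => /eqP Fi0.
by rewrite (bigD1 i) //= Fi0.
Qed.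

Lemma ltabs_bigmul (I : finType) (P P' : pred I) (F F' : I -> S) :
  (forall i, P i -> F i != 𝟘) -> (forall i, P' i -> F' i != 𝟘) ->
  ltabs (\bigotimes_(i | P i) F i) (\bigotimes_(i | P' i) F' i) =
  (\sum_(i | P i) sabs (F i) < \sum_(i | P' i) sabs (F' i)).
Proof. by move=> F0 F'0; have [s ->] := bigmul_Some F0; have [s' ->] := bigmul_Some F'0. Qed.

Lemma bigmul_balanced (I : finType) (P : pred I) (F : I -> S) j :
  P j -> balanced (F j) -> balanced (\bigotimes_(i | P i) F i).
Proof. by move=> Pj bal; rewrite (bigD1 j) //= /balanced -smulNl bal. Qed.

Lemma ssign_powE m (x : S) : ssign_pow G m ⊗ x = if odd m then ⊖ x else x.
Proof.
rewrite /ssign_pow; case: (odd m); last exact: smul1l.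
by case: x => [[a []]|] //=; rewrite add0r.
Qed.

Lemma ssign_powD m m' : ssign_pow G m ⊗ ssign_pow G m' = ssign_pow G (m + m').
Proof. by rewrite ssign_powE /ssign_pow oddD; case: (odd m); case: (odd m'). Qed.

Lemma ssign_pow_eq0 m (x : S) : (ssign_pow G m ⊗ x == 𝟘) = (x == 𝟘).
Proof. by rewrite ssign_powE; case: odd; case: x => [[a []]|]. Qed.

Lemma ltabs_ssign m m' (x y : S) :
  ltabs (ssign_pow G m ⊗ x) (ssign_pow G m' ⊗ y) = ltabs x y.
Proof. by rewrite !ssign_powE; case: odd; case: odd; rewrite ?ltabsNl ?ltabsNr. Qed.

Lemma lift_perm_bij m (i j : 'I_m.+1) :
  {on [pred s : 'S_m.+1 | s j == i], bijective (@lift_perm m j i)}.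
Proof.
pose f (s : 'S_m.+1) k := odflt k (unlift (s j) (s (lift j k))).
have fK (s : 'S_m.+1) k : lift (s j) (f s k) = s (lift j k).
  rewrite /f; case: unliftP => [k' -> //|/perm_inj/eqP].
  by rewrite eq_sym (negbTE (neq_lift j k)).
have f_inj (s : 'S_m.+1) : injective (f s).
  by move=> k1 k2 /(congr1 (lift (s j))); rewrite !fK => /perm_inj/lift_inj.
exists (fun s => perm (f_inj s)) => [s _|s].
  by apply/permP => k; rewrite permE /f lift_perm_id lift_perm_lift liftK.
rewrite inE => /eqP sj; apply/permP => k.
case: (unliftP j k) => [k' ->|->]; last by rewrite lift_perm_id.
by rewrite lift_perm_lift permE -sj fK.
Qed.

Lemma sadj_expand m (M : 'M[S]_m.+1) i j :
  sadj M i j = \bigoplus_(s : 'S_m.+1 | s j == i)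
                 ssign_pow G (odd_perm s) ⊗ \bigotimes_(r | j != r) M r (s r).
Proof.
rewrite /sadj mxE /sdet /sbig_add smul_sumr (reindex _ (lift_perm_bij i j)).
apply: eq_big => [s | s _]; first by rewrite /= lift_perm_id eqxx.
rewrite smulA ssign_powD odd_lift_perm /ssign_pow !oddD !oddb [odd i (+) _]addbC; congr smul.
rewrite /sbig_mul [RHS](reindex_omap (lift j) (unlift j)) /=.
  by apply: eq_big => [r|r _]; rewrite ?neq_lift ?liftK ?eqxx // !mxE lift_perm_lift.
by move=> r jr; case: unliftP jr => [k ->|->]; rewrite ?eqxx.
Qed.

Section DominantMatrix.
Variables (n : nat) (B : 'M[S]_n.+1).
Hypothesis B_diag_neq0 : forall r, B r r != 𝟘.
Hypothesis B_dominant : forall r c, r != c -> B r c != 𝟘 ->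
  sabs (B r c) *+ 2 < sabs (B r r) + sabs (B c c).

(* Diagonal dominance makes the identity permutation beat every other term. *)
Lemma sadj_diag j : sadj B j j = \bigotimes_(r | j != r) B r r.
Proof.
rewrite sadj_expand (@big_dominated _ _ (fun s => s == 1%g)).
  rewrite (big_pred1 1%g) => [|s /=]; last first.
    by case: (eqVneq s 1%g) => [->|]; rewrite ?perm1 ?eqxx ?andbF.
  by rewrite odd_perm1 smul1l; apply: eq_bigr => r _; rewrite perm1.
move=> s /eqP sj s_neq1; set t := _ ⊗ _.
case: (eqVneq t 𝟘) => [->|t_neq0]; [by left | right; exists 1%g; first by rewrite perm1 !eqxx].
have prod_neq0 : \bigotimes_(r | j != r) B r (s r) != 𝟘 by rewrite -(ssign_pow_eq0 (odd_perm s)).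
rewrite ltabs_ssign ltabs_bigmul => [|r jr|r _]; last 2 first.
- exact: bigmul_neq0_factor prod_neq0 jr.
- by rewrite perm1.
under [X in _ < X]eq_bigr do rewrite perm1.
have moved_j r : s r != r -> j != r by apply: contra => /eqP <-; rewrite sj.
apply: (sum_perm_lt_id HG (w := fun r c => sabs (B r c))) => // r sr.
apply: B_dominant; first by rewrite eq_sym.
exact: bigmul_neq0_factor prod_neq0 (moved_j r sr).
Qed.

Variables (a : 'M[S]_n.+1) (k : 'I_n.+1).
Hypothesis B_offdiag : forall r c, r != c -> B r c = ⊖ a r c.

Section Column.
Variable l : 'I_n.+1.
Hypothesis lk : l != k.

(* [B] with row [k] replaced by row [l]: both sides of [sadj_col_eq] expand into
   permutation terms of its determinant. *)
Definition Bl (r c : 'I_n.+1) : S := B (if r == k then l else r) c.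

Definition det_term (s : 'S_n.+1) : S :=
  ssign_pow G (odd_perm s) ⊗ \bigotimes_r Bl r (s r).

Lemma ssign_tpermM (s : 'S_n.+1) x :
  ssign_pow G (odd_perm (tperm k l * s)) ⊗ x = ⊖ (ssign_pow G (odd_perm s) ⊗ x).
Proof.
rewrite odd_mul_tperm eq_sym lk !ssign_powE.
by case: (odd_perm s); rewrite /= ?soppK.
Qed.

Lemma det_term_tpermM (s : 'S_n.+1) : det_term (tperm k l * s) = ⊖ det_term s.
Proof.
rewrite /det_term ssign_tpermM; congr (⊖ (_ ⊗ _)).
rewrite [RHS](reindex_inj (@perm_inj _ (tperm k l))) /=.
apply: eq_bigr => r _; rewrite permM /Bl.
by case: tpermP => [->|->|/eqP rk /eqP rl]; rewrite ?eqxx ?(negbTE lk) ?(negbTE rk).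
Qed.

Lemma smul_sadj_terms : B l l ⊗ sadj B l k = \bigoplus_(s : 'S_n.+1 | s k == l) det_term s.
Proof.
rewrite sadj_expand smul_sumr; apply: eq_bigr => s /eqP skl.
rewrite /det_term [\bigotimes_r _](bigD1 k) //= {1}/Bl eqxx skl smulA (smulC (B l l)) -smulA.
congr (_ ⊗ (_ ⊗ _)); apply: eq_big => r; first by rewrite eq_sym.
by move=> kr; rewrite /Bl eq_sym (negbTE kr).
Qed.

Lemma det_term_tperm_row (s : 'S_n.+1) : s l != l ->
  a l (s l) ⊗ (ssign_pow G (odd_perm (tperm k l * s))
                ⊗ \bigotimes_(r | k != r) B r ((tperm k l * s)%g r)) = det_term s.
Proof.
move=> sl; rewrite ssign_tpermM /det_term [\bigotimes_r _](bigD1 k) //=.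
rewrite [\big[_/_]_(i | i != k) Bl i (s i)](bigD1 l) /=; last by rewrite lk.
rewrite [\big[_/_]_(i | k != i) B i _](bigD1 l) /=; last by rewrite eq_sym lk.
rewrite !permM tpermR /Bl eqxx (negbTE lk) (B_offdiag (_ : l != s l)) 1?eq_sym //.
have -> : \bigotimes_(r | (k != r) && (r != l)) B r ((tperm k l * s)%g r) =
          \bigotimes_(r | (r != k) && (r != l)) B (if r == k then l else r) (s r).
  apply: eq_big => [r|r /andP[kr rl]]; first by rewrite eq_sym.
  by rewrite permM tpermD ?(eq_sym l) // eq_sym (negbTE kr).
by rewrite smulNl !smulNr smulCA [a l (s l) ⊗ _]smulCA.
Qed.

Lemma smul_offdiag_sadj_terms :
  \bigoplus_(m | m != l) a l m ⊗ sadj B m k = \bigoplus_(s : 'S_n.+1 | s l != l) det_term s.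
Proof.
transitivity (\bigoplus_(s : 'S_n.+1 | s k != l)
   a l (s k) ⊗ (ssign_pow G (odd_perm s) ⊗ \bigotimes_(r | k != r) B r (s r))).
  rewrite (partition_big (fun s : 'S_n.+1 => s k) (fun m => m != l)) //=.
  apply: eq_bigr => m ml; rewrite sadj_expand smul_sumr.
  apply: eq_big => s; first by case: (s k =P m) => [->|]; rewrite ?ml ?andbF.
  by move=> /eqP ->.
rewrite (reindex_inj (mulgI (tperm k l))) /=.
apply: eq_big => s; first by rewrite permM tpermL.
by rewrite permM tpermL; apply: det_term_tperm_row.
Qed.

Lemma sum_sabs_Bl (q : 'S_n.+1) (O : {set 'I_n.+1}) : k \notin O ->
  \sum_r sabs (Bl r (q r)) = \sum_(r in O) sabs (B r (q r))
     + (sabs (B l (q k)) + \sum_(r | (r \notin O) && (r != k)) sabs (B r (q r))).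
Proof.
move=> kO; rewrite (bigID (mem O)) /= [X in _ + X](bigD1 k) //= {2}/Bl eqxx.
congr (_ + (_ + _)); apply: eq_bigr => r.
  by move=> rO; rewrite /Bl ifN //; apply: contraNneq kO => <-.
by case/andP=> _ rk; rewrite /Bl (negbTE rk).
Qed.

Lemma det_term_dominated (t : 'S_n.+1) : t l != l -> k \notin porbit t l ->
  det_term t != 𝟘 ->
  exists2 p : 'S_n.+1, (p l != l) && (p k == l) & ltabs (det_term t) (det_term p).
Proof.
move=> tl kO; rewrite /det_term ssign_pow_eq0 => t_neq0; set O := porbit t l.
have [p [pk pl pO pout]] := perm_skip_orbit kO.
exists p.
  rewrite pk pl eqxx andbT; apply: contraNneq kO => tkl.
  by rewrite -(porbit_closed t l) tkl porbit_id.
have Bt0 r : Bl r (t r) != 𝟘 := bigmul_neq0_factor t_neq0 isT.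
have rOk r : r \in O -> r != k by apply: contraTneq => ->.
have Bp0 r : Bl r (p r) != 𝟘.
  have [->|rk] := eqVneq r k; first by rewrite pk /Bl eqxx.
  have [->|rl] := eqVneq r l.
    by rewrite pl /Bl (negbTE lk); have := Bt0 k; rewrite /Bl eqxx.
  rewrite /Bl (negbTE rk); case: (boolP (r \in O)) => rO; first by rewrite pO.
  by rewrite pout //; have := Bt0 r; rewrite /Bl (negbTE rk).
have lO : l \in O := porbit_id t l.
rewrite ltabs_ssign ltabs_bigmul // !(sum_sabs_Bl _ kO) pk.
rewrite [X in _ < X + _](bigD1 l) //= pl.
rewrite [X in _ < _ + X + _](eq_bigr (fun r => sabs (B r r))) => [|r /andP[rO rl]];
  last by rewrite pO.
rewrite [X in _ < _ + (_ + X)](eq_bigr (fun r => sabs (B r (t r)))) => [|r /andP[rO rk]];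
  last by rewrite pout.
have cycle_lt : \sum_(r in O) sabs (B r (t r)) <
                sabs (B l l) + \sum_(r in O | r != l) sabs (B r r).
  rewrite -(bigD1 l) //=.
  apply: (sum_perm_lt_on HG (w := fun r c => sabs (B r c))) lO (porbit_closed t l) _ => r rO.
  apply: B_dominant; first by rewrite eq_sym (porbit_moved tl rO).
  by have := Bt0 r; rewrite /Bl (negbTE (rOk r rO)).
set x := sabs (B l (t k)).
by rewrite [X in _ < X]addrACA (addrC x) -addrACA (toag_ltD2r HG).
Qed.

(* A term with [s k != l] is beaten by one with [p k = l]; when [k] lies on the
   cycle of [l], multiplying by the transposition (k l) first only flips its sign. *)
Lemma det_terms_dominated :
  \bigoplus_(s : 'S_n.+1 | s l != l) det_term s = \bigoplus_(s : 'S_n.+1 | s k == l) det_term s.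
Proof.
rewrite (@big_dominated _ _ (fun s : 'S_n.+1 => s k == l)).
  apply: eq_bigl => s; case: (eqVneq (s k) l) => [skl|]; rewrite ?andbF ?andbT //.
  by apply: contra_neq lk => sll; apply: (@perm_inj _ s); rewrite sll skl.
move=> s sl skl; case: (eqVneq (det_term s) 𝟘) => [->|s_neq0]; [by left | right].
have [kO|kO] := boolP (k \in porbit s l); last exact: det_term_dominated.
have kl : k != l by rewrite eq_sym.
have [|||p pP] := @det_term_dominated (tperm k l * s);
  rewrite ?det_term_tpermM ?sopp_eq0 ?porbit_tpermM ?ltabsNl //; last by exists p.
by rewrite permM tpermR.
Qed.

Lemma sadj_col_eq : B l l ⊗ sadj B l k = \bigoplus_(m | m != l) a l m ⊗ sadj B m k.
Proof. by rewrite smul_sadj_terms smul_offdiag_sadj_terms det_terms_dominated. Qed.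

End Column.

Lemma dominant_system_unique (v w : 'I_n.+1 -> S) :
  (forall l, l != k -> signed (B l l)) ->
  (forall i, signed (v i)) -> (forall i, signed (w i)) -> v k = w k ->
  (forall l, l != k -> B l l ⊗ w l = \bigoplus_(m | m != l) a l m ⊗ w m) ->
  (forall l, l != k -> balanced (B l l ⊗ v l ⊖ \bigoplus_(m | m != l) a l m ⊗ v m)) ->
  v =1 w.
Proof.
move=> B_sig vs ws vwk w_eq v_eq i; apply/eqP/negP => /negP vwi.
pose D := [set m | v m != w m].
(* Maximizing [K] over the discrepancy set makes all other discrepant terms of
   row [l] negligible. *)
pose K m := sabs (sbigger (v m) (w m)) *+ 2 + sabs (B m m).
have iD : i \in enum D by rewrite mem_enum inE.
have [l] := toag_argmax HG K iD; rewrite mem_enum inE => vwl lmax.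
have lk : l != k by apply: contraNneq vwl => ->; rewrite vwk.
set M := B l l ⊗ sbigger (v l) (w l).
have negl (x : 'I_n.+1 -> S) : (x = v \/ x = w) ->
    \bigoplus_(m | (m != l) && (m \in D)) a l m ⊗ x m = 𝟘 \/
    ltabs (\bigoplus_(m | (m != l) && (m \in D)) a l m ⊗ x m) M.
  move=> xvw; apply: sum_ltabs => m /andP[ml mD].
  have [->|a0] := eqVneq (a l m) 𝟘; first by left.
  have [->|x0] := eqVneq (x m) 𝟘; first by left; rewrite smul0r.
  have ax0 : a l m ⊗ x m != 𝟘 by rewrite smul_eq0 negb_or a0.
  have M0 : M != 𝟘 by rewrite smul_eq0 negb_or B_diag_neq0 sbigger_neq0.
  right; rewrite ltabsE // !sabs_smul ?B_diag_neq0 ?sbigger_neq0 //.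
  apply: (toag_ltD_double HG _ _ (lmax m _)); last by rewrite mem_enum.
  - have lm : l != m by rewrite eq_sym.
    by rewrite -(sabsN (a l m)) -B_offdiag // B_dominant // B_offdiag // sopp_eq0.
  - by case: xvw x0 => -> x0; [exact: sabs_le_sbiggerl | exact: sabs_le_sbiggerr].
have split (x : 'I_n.+1 -> S) : \bigoplus_(m | m != l) a l m ⊗ x m =
    \bigoplus_(m | (m != l) && (m \notin D)) a l m ⊗ x m ⊕
    \bigoplus_(m | (m != l) && (m \in D)) a l m ⊗ x m.
  by rewrite (bigID (mem D)) saddC.
have vw_out : \bigoplus_(m | (m != l) && (m \notin D)) a l m ⊗ v m =
              \bigoplus_(m | (m != l) && (m \notin D)) a l m ⊗ w m.
  by apply: eq_bigr => m /andP[_]; rewrite inE negbK => /eqP ->.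
have := v_eq l lk; rewrite split vw_out.
apply: (perturbed_row_not_balanced (B_sig l lk) _ (vs l) (ws l) vwl (negl w _) (negl v _)) => //.
- by right.
- by left.
- by rewrite w_eq // split.
Qed.

End DominantMatrix.

Section ShiftedTPD.
Variables (n : nat) (A : 'M[S]_n.+1) (k : 'I_n.+1).
Hypothesis HA : TPD A.
Local Notation B := (sshift (A k k) A).

Lemma TPD_diag_pos i : exists d, A i i = Some (d, sPos).
Proof.
case: HA => _ _ Apos _; move: (Apos i); rewrite /slt /ssub /=.
by case: (A i i) => [[d []]|] //= _; exists d.
Qed.

Lemma sshift_diag i : B i i = A k k ⊖ A i i.
Proof. by rewrite mxE eqxx. Qed.

Lemma sshift_offdiag r c : r != c -> B r c = ⊖ A r c.
Proof. by move=> rc; rewrite mxE (negbTE rc). Qed.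

Lemma sshift_diag_neq0 i : B i i != 𝟘.
Proof.
rewrite sshift_diag; have [d ->] := TPD_diag_pos i; have [g ->] := TPD_diag_pos k.
by rewrite /ssub /=; do 2?case: ifP.
Qed.

Lemma sabs_le_sshift_diag i : sabs (A i i) <= sabs (B i i).
Proof.
rewrite sshift_diag; have [d ->] := TPD_diag_pos i; have [g ->] := TPD_diag_pos k.
rewrite /ssub /=; case: ifP => [_|gd] /=; first exact: lexx.
by case: ifP => [/ltW //|_]; move/negbT: gd; rewrite (toag_ltNge HG) negbK.
Qed.

Lemma sshift_diag_signed i : A i i != A k k -> signed (B i i).
Proof.
rewrite sshift_diag; have [d ->] := TPD_diag_pos i; have [g ->] := TPD_diag_pos k.
rewrite /ssub /=; case: (toag_trichotomy HG g d) => [gd|<-|gd]; decide_lt => //=.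
by rewrite eqxx.
Qed.

Lemma sshift_diag_balanced i : A i i = A k k -> balanced (B i i).
Proof.
by move=> Aik; rewrite sshift_diag Aik; have [g ->] := TPD_diag_pos k; rewrite /ssub /= ltxx.
Qed.

Lemma sshift_dominant r c : r != c -> B r c != 𝟘 ->
  sabs (B r c) *+ 2 < sabs (B r r) + sabs (B c c).
Proof.
move=> rc; rewrite sshift_offdiag // sopp_eq0 sabsN => Arc0.
apply: (lt_le_trans _ (toag_leD HG (sabs_le_sshift_diag r) (sabs_le_sshift_diag c))).
case: HA => _ Asig _ /(_ r c rc); have := Asig r c.
have [dr ->] := TPD_diag_pos r; have [dc ->] := TPD_diag_pos c.
move: Arc0; rewrite /slt /ssub /=; case: (A r c) => [[e []]|] //= _ _;
  by rewrite mulr2n; do 2?case: ifP.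
Qed.

Lemma sadj_sshift_diag j : sadj B j j = \bigotimes_(r | j != r) B r r.
Proof. exact: sadj_diag sshift_diag_neq0 sshift_dominant j. Qed.

Lemma sadj_sshift_diag_not_signed i j : j != i -> A i i = A k k -> ~ signed (sadj B j j).
Proof.
move=> ji Aik; rewrite sadj_sshift_diag => sig.
have := signed_balanced_eq0 sig
  (bigmul_balanced (P := fun r => j != r) (F := fun r => B r r) ji (sshift_diag_balanced Aik)).
by apply/eqP/bigmul_neq0 => r _; apply: sshift_diag_neq0.
Qed.

Lemma seigenvector_sshift_balanced v l : seigenvector A (A k k) v ->
  balanced (B l l ⊗ v l ⊖ \bigoplus_(m | m != l) A l m ⊗ v m).
Proof.
case=> _ _ /(_ l); rewrite /sbal /smulmxv /sbig_add (bigD1 l) //=.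
set R := \bigoplus_(m | m != l) _ => bal.
have -> : B l l ⊗ v l ⊖ R = ⊖ ((A l l ⊗ v l ⊕ R) ⊖ A k k ⊗ v l).
  by rewrite sshift_diag /ssub smulDl smulNl !soppD !soppK [RHS]saddC saddA.
by rewrite /balanced soppK bal.
Qed.

Lemma seigenvector_sadj_multiple v :
  (forall i, A i i = A k k -> i = k) -> signed_vec (fun i => sadj B i k) ->
  seigenvector A (A k k) v -> exists lam, forall i, v i = lam ⊗ sadj B i k.
Proof.
move=> simple u_sig eig; have [vs _ _] := eig.
have uk0 : sadj B k k != 𝟘.
  by rewrite sadj_sshift_diag; apply: bigmul_neq0 => r _; apply: sshift_diag_neq0.
exists (v k ⊗ sinv (sadj B k k)).
apply: (dominant_system_unique (k := k) sshift_diag_neq0 sshift_dominant sshift_offdiag).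
- by move=> l lk; apply/sshift_diag_signed/contra_neq/lk/simple.
- exact: vs.
- by move=> i; apply/signed_smul/u_sig/signed_smul/signed_sinv/u_sig/vs.
- by rewrite -smulA sinvK // smul1r.
- move=> l lk; rewrite smulCA (sadj_col_eq sshift_diag_neq0 sshift_dominant sshift_offdiag lk).
  rewrite smul_sumr.
  by apply: eq_bigr => m _; rewrite smulCA.
- by move=> l lk; apply: seigenvector_sshift_balanced.
Qed.

End ShiftedTPD.
End Smax.

Theorem corollary5p4 (G : porderZmodType) (HG : divisible_toag G)
  (n : nat) (A : 'M[Smax G]_n.+1) (HA : TPD A)
  (Hsorted : forall i j : 'I_n.+1, (i <= j)%N -> sle (A j j) (A i i))
  (k j : 'I_n.+1)
  (Hcol : signed_vec (fun i => sadj (sshift (A k k) A) i j) /\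
          nonzero_vec (fun i => sadj (sshift (A k k) A) i j)) :
  j = k /\
  (forall v : 'I_n.+1 -> Smax G, seigenvector A (A k k) v ->
     exists lam : Smax G, forall i, v i = smul lam (sadj (sshift (A k k) A) i j)) /\
  simple_eigenvalue_TPD A (A k k).
Proof.
have not_signed := sadj_sshift_diag_not_signed HG (k := k) HA.
have jk : j = k.
  by apply/eqP/negP => /negP jk; apply: (not_signed k j jk erefl (Hcol.1 j)).
subst j; have simple i : A i i = A k k -> i = k.
  move=> Aik; apply/eqP/negP => /negP ik.
  by apply: (not_signed i k _ Aik (Hcol.1 k)); rewrite eq_sym.
split=> //; split; last by exists k.
by move=> v; apply: seigenvector_sadj_multiple Hcol.1.
Qed.
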